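(* Let $1\le p<2$, $f\in\mathcal H_0$, $u$ the solution of $\partial_tu+\partial J(u)\ni0$, $u(0)=f$, with extinction time $T_{\mathrm{ex}}$, and $w(t):=u(t)/a(t)$ with $a(t)=(1-t/T_{\mathrm{ex}})^{1/(2-p)}$. Assume $T_{\mathrm{ex}}=\frac{\|f\|^{2-p}}{(2-p)\lambda_1}$ and let $w_*$ be an asymptotic profile, i.e. $w_*\in\mathcal H$ with $w(t_k)\to w_*$ strongly for some $t_k\nearrow T_{\mathrm{ex}}$. Then $w_*$ is a ground state.
   Context: $\mathcal H$ is a real Hilbert space with inner product $\langle\cdot,\cdot\rangle$ and norm $\|\cdot\|$. $J:\mathcal H\to\mathbb R\cup\{\infty\}$ is convex, lower semicontinuous, proper, with dense effective domain, and absolutely $p$-homogeneous: $J(cu)=|c|^pJ(u)$ for $c\ne0$, $J(0)=0$. $\partial J(u)=\{\zeta: J(u)+\langle\zeta,v-u\rangle\le J(v)\ \forall v\}$; $\mathcal N(J)=\{u:J(u)=0\}$; $\mathcal H_0:=\mathcal N(J)^\perp\setminus\{0\}$. Rayleigh quotient $R(u):=pJ(u)/\|u\|^p$; standing coercivity assumption $\lambda_1:=\inf_{u\in\mathcal H_0}R(u)>0$; a ground state is a minimizer of $R$ over $\mathcal H_0$. The gradient flow solution (Brezis) is the unique continuous $u:[0,\infty)\to\mathcal H$, Lipschitz on $[\delta,\infty)$ for all $\delta>0$, right-differentiable on $(0,\infty)$ with $u(0)=f$ and $\partial_t^+u(t)=-\zeta(t)$, $\zeta(t)$ the minimal-norm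 element of $\partial J(u(t))$. $T_{\mathrm{ex}}:=\inf\{T>0:u(t)=0\ \forall t\ge T\}$. *)

From HB Require Import structures.
From mathcomp Require Import all_boot all_order all_algebra.
From mathcomp Require Import all_classical all_reals all_analysis.
Set Implicit Arguments. Unset Strict Implicit. Unset Printing Implicit Defensive.
Import Order.TTheory GRing.Theory Num.Theory.
Import numFieldNormedType.Exports.
Local Open Scope classical_set_scope.
Local Open Scope ring_scope.

Section Defs.
Variables (R : realType) (V : normedModType R).

(* [inner] is an inner product inducing the norm of V; together with
   completeness of V this makes V a real Hilbert space. *)
Definition is_inner_product (inner : V -> V -> R) : Prop :=
  [/\ (forall x y, inner x y = inner y x),
      (forall (a : R) x y z, inner (a *: x + y) z = a * inner x z + inner y z)
    & (forall x, `|x| ^+ 2 = inner x x)].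

Definition convex_functional (J : V -> \bar R) : Prop :=
  forall (t : R) (x y : V), 0 <= t <= 1 ->
    (J (t *: x + (1 - t) *: y)%R <= t%:E * J x + (1 - t)%:E * J y)%E.

Definition proper_functional (J : V -> \bar R) : Prop :=
  (forall x, J x != -oo%E) /\ (exists x, (J x < +oo)%E).

Definition effective_domain (J : V -> \bar R) : set V :=
  [set x | (J x < +oo)%E].

Definition dense_set (A : set V) : Prop := closure A = setT.

Definition abs_homogeneous (p : R) (J : V -> \bar R) : Prop :=
  (forall (c : R) (x : V), c != 0 -> J (c *: x) = ((`|c| `^ p)%:E * J x)%E)
  /\ J (0 : V) = 0%E.

Definition subdiff (inner : V -> V -> R) (J : V -> \bar R) (x : V) : set V :=
  [set z | forall v, (J x + (inner z (v - x)%R)%:E <= J v)%E].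

Definition min_norm_subgrad (inner : V -> V -> R) (J : V -> \bar R)
    (x z : V) : Prop :=
  subdiff inner J x z /\ forall y, subdiff inner J x y -> `|z| <= `|y|.

Definition nullJ (J : V -> \bar R) : set V := [set x | J x = 0%E].

Definition H0 (inner : V -> V -> R) (J : V -> \bar R) : set V :=
  [set x | x != 0 /\ forall n, nullJ J n -> inner x n = 0].

Definition rayleigh (p : R) (J : V -> \bar R) (x : V) : \bar R :=
  ((p / (`|x| `^ p))%:E * J x)%E.

Definition lambda1 (p : R) (inner : V -> V -> R) (J : V -> \bar R) : \bar R :=
  ereal_inf [set rayleigh p J x | x in H0 inner J].

Definition ground_state (p : R) (inner : V -> V -> R) (J : V -> \bar R)
    (w : V) : Prop :=
  H0 inner J w /\ forall v, H0 inner J v -> (rayleigh p J w <= rayleigh p J v)%E.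

(* Brezis gradient flow solution of du/dt + dJ(u) \ni 0, u(0) = f
   (u is only relevant on [0, +oo)). *)
Definition gradient_flow_solution (inner : V -> V -> R) (J : V -> \bar R)
    (f : V) (u : R -> V) : Prop :=
  [/\ {within [set t : R | 0 <= t], continuous u},
      (forall delta : R, 0 < delta -> exists L : R, forall s t,
          delta <= s -> delta <= t -> `|u s - u t| <= L * `|s - t|),
      u 0 = f
    & forall t : R, 0 < t -> exists zeta : V,
        min_norm_subgrad inner J (u t) zeta /\
        (h^-1 *: (u (t + h) - u t) @[h --> (0 : R)^'+] --> - zeta)].

(* extinction time T_ex = inf {T > 0 | u(t) = 0 for all t >= T}
   (as an extended real: +oo if the set is empty) *)
Definition extinction_time (u : R -> V) : \bar R :=
  ereal_inf [set T%:E | T in [set T : R | 0 < T /\ forall t, T <= t -> u t = 0]].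

End Defs.

From HB Require Import structures.
From mathcomp Require Import all_boot all_order all_algebra.
From mathcomp Require Import all_classical all_reals all_analysis.
From mathcomp Require Import ring lra.
Import Order.TTheory GRing.Theory Num.Theory.
Import numFieldNormedType.Exports.
Set Implicit Arguments.
Unset Strict Implicit.
Unset Printing Implicit Defensive.
Local Open Scope classical_set_scope.
Local Open Scope ring_scope.

(* With c = (2 - p) lam1, the function psi t = |u t|^(2-p) + c t is
   nonincreasing along the flow: its right derivative is
   (2 - p) (lam1 - <zeta, u t> / |u t|^p), and Euler's inequality for the
   p-homogeneous J together with the Rayleigh bound gives
   <zeta, u t> >= p J (u t) >= lam1 |u t|^p.  As psi 0 = |f|^(2-p) = c Tex and
   psi t >= c t, psi is constant on [0, Tex); hence |u t| = |f| a(t) and, the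
   right derivative of psi being 0, p J (u t) <= lam1 |u t|^p.  So the rescaled
   w(t) = u t / a(t) has norm |f|, is orthogonal to N(J) and has Rayleigh
   quotient at most lam1, and lower semicontinuity passes this to any strong
   limit.  Monotonicity from one-sided derivatives is Dini's lemma, proved by
   continuous induction. *)

Section RightSlope.
Variable R : realType.
Implicit Types (phi E : R -> R) (A : set R) (a b t x d D : R).

Lemma cvg_within_dist_lt phi A t :
  phi @ within A (nbhs t) --> phi t ->
  forall e, 0 < e -> exists2 d, 0 < d &
    forall s, A s -> `|s - t| < d -> `|phi s - phi t| < e.
Proof.
move=> phi_cvg e e0.
have /(_ (within_filter _ _)) := (cvgrPdist_lt _ _).1 phi_cvg e e0.
rewrite near_withinE => /nbhs_ballP[d d0 near_t].
exists d => // s As st.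
by rewrite distrC; apply: near_t => //; rewrite /ball /= distrC.
Qed.

Section Dini.
Variables (phi : R -> R) (A : set R) (a b : R).
Hypotheses (le_ab : a <= b) (sub_abA : forall s, a <= s <= b -> A s)
  (phi_cont : forall t, a <= t <= b -> phi @ within A (nbhs t) --> phi t)
  (phi_dini : forall t, a < t < b -> forall e, 0 < e ->
     \forall h \near 0^'+, phi (t + h) - phi t <= e * h).

Section LineBound.
Variable e : R.
Hypothesis e_gt0 : 0 < e.

(* Continuous induction along [S], the part of [a, b] where [phi] stays
   below the line of slope [e] through [(a, phi a + e)]. *)
Let S := [set t | a <= t <= b /\ phi t <= phi a + e * (t - a) + e].

Let S_a : S a.
Proof. by split; [rewrite lexx le_ab | rewrite subrr mulr0 addr0 lerDl ltW]. Qed.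

Let S_has_sup : has_sup S.
Proof. by split; [exists a | exists b => t [/andP[]]]. Qed.

Local Notation s := (sup S).

Let s_in_ab : a <= s <= b.
Proof.
apply/andP; split; first exact: sup_upper_bound S_has_sup _ S_a.
by apply: ge_sup => [|t [/andP[]]] //; exists a.
Qed.

Let S_s : S s.
Proof.
split => //; rewrite leNgt; apply/negP => gap.
set eta := phi s - (phi a + e * (s - a) + e).
have eta2 : 0 < eta / 2 by rewrite divr_gt0 // subr_gt0.
have [d d0 near_s] := cvg_within_dist_lt (phi_cont s_in_ab) eta2.
have [r [/andP[ar rb] phir] sdr] := sup_adherent d0 S_has_sup.
have rs : r <= s by apply: sup_upper_bound S_has_sup _ _; split => //; apply/andP.
have rsd : `|r - s| < d by rewrite ler0_norm ?subr_le0 //; lra.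
have := near_s r (@sub_abA r ltac:(by rewrite ar rb)) rsd.
rewrite ltr_norml => /andP[phir_lb _].
have : e * (r - a) <= e * (s - a) by rewrite ler_pM2l //; lra.
rewrite /eta in phir_lb; lra.
Qed.

Let S_right_of_s : s < b -> \forall h \near 0^'+, S (s + h).
Proof.
move=> sb; case/andP: s_in_ab => as_ _; case: S_s => _ phis.
have below : \forall h \near 0^'+, phi (s + h) <= phi a + e * (s + h - a) + e.
  move: as_; rewrite le_eqVlt => /orP[/eqP as_ | as_].
  - have aab : a <= a <= b by rewrite lexx le_ab.
    have [d d0 near_a] := cvg_within_dist_lt (phi_cont aab) e_gt0.
    near=> h.
    have h0 : 0 < h by near: h; exact: nbhs_right_gt.
    have hd : h < d by near: h; exact: nbhs_right_lt.
    have hb : h < b - s by near: h; apply: nbhs_right_lt; rewrite subr_gt0.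
    have shA : A (s + h) by apply: sub_abA; apply/andP; split; lra.
    have hsa : `|s + h - a| < d by rewrite gtr0_norm; lra.
    have := near_a (s + h) shA hsa; rewrite ltr_norml => /andP[_ phish].
    have sha : 0 <= s + h - a by lra.
    have := mulr_ge0 (ltW e_gt0) sha.
    lra.
  - have := @phi_dini s ltac:(by rewrite as_ sb) e e_gt0; apply: filterS => h /= dini_h.
    have -> : e * (s + h - a) = e * (s - a) + e * h by ring.
    lra.
near=> h.
have h0 : 0 < h by near: h; exact: nbhs_right_gt.
have hb : h < b - s by near: h; apply: nbhs_right_lt; rewrite subr_gt0.
have shab : a <= s + h <= b.
  by rewrite (le_trans as_) ?lerDl ?(ltW h0) //= addrC -lerBrDr (ltW hb).
by split; last by near: h.
Unshelve. all: by end_near.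
Qed.

Let s_eq_b : s = b.
Proof.
apply/eqP; rewrite eq_le; case/andP: s_in_ab => _ -> /=.
rewrite leNgt; apply/negP => /S_right_of_s near_S.
have /filter_ex[h [h0 Sh]] : \forall h \near 0^'+, 0 < h /\ S (s + h).
  by near=> h; split; [near: h; exact: nbhs_right_gt | near: h].
by have := sup_upper_bound S_has_sup Sh; rewrite gerDl leNgt h0.
Unshelve. all: by end_near.
Qed.

Lemma dini_line_bound : phi b <= phi a + e * (b - a) + e.
Proof. by rewrite -s_eq_b; case: S_s. Qed.

End LineBound.

Lemma dini_nonincreasing : phi b <= phi a.
Proof.
apply/ler_addgt0Pr => eps eps0.
have den0 : 0 < b - a + 1 by have := le_ab; lra.
have := dini_line_bound (divr_gt0 eps0 den0).
rewrite -addrA (_ : _ * (b - a) + _ = eps) //.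
by field; rewrite gt_eqF.
Qed.

End Dini.

Lemma right_slope_le0_nonincreasing phi A a b :
  a <= b -> (forall s, a <= s <= b -> A s) ->
  (forall t, a <= t <= b -> phi @ within A (nbhs t) --> phi t) ->
  (forall t, a < t < b -> exists2 D : R, D <= 0 &
     (fun h => h^-1 * (phi (t + h) - phi t)) @ 0^'+ --> D) ->
  phi b <= phi a.
Proof.
move=> ab abA cont slope; apply: dini_nonincreasing ab abA cont _ => t abt e e0.
have [D D0 slope_t] := slope t abt.
have De : D < e by exact: le_lt_trans D0 e0.
near=> h.
have h0 : 0 < h by near: h; exact: nbhs_right_gt.
rewrite mulrC -ler_pdivrMl //.
by near: h; exact: cvgr_le slope_t _ De.
Unshelve. all: by end_near.
Qed.

Lemma right_slope_eq0 phi t D :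
  (\forall h \near 0^'+, phi (t + h) = phi t) ->
  (fun h => h^-1 * (phi (t + h) - phi t)) @ 0^'+ --> D -> D = 0.
Proof.
move=> phi_cst slope; apply: (cvg_unique (@norm_hausdorff _ _) slope); apply: cvg_near_cst.
by apply: filterS phi_cst => h ->; rewrite subrr mulr0.
Qed.

Lemma is_derive_slope {phi x d} : is_derive x 1 phi d ->
  (fun h => h^-1 * (phi (x + h) - phi x)) @ 0^' --> d.
Proof.
move=> phi_d; have /cvg_ex[l phi_l] := @ex_derive _ _ _ _ _ _ _ phi_d.
have <- : lim (h^-1 *: (phi (h *: 1 + x) - phi x) @[h --> 0^']) = d.
  exact: @derive_val _ _ _ _ _ _ _ phi_d.
rewrite (cvg_lim _ phi_l) //; apply: cvg_trans phi_l; apply: near_eq_cvg.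
by near=> h; rewrite /= -[h%:A]/(h * 1) mulr1 (addrC h x).
Unshelve. all: by end_near.
Qed.

Lemma right_slope_comp phi E t d dE :
  is_derive (E t) 1 phi d ->
  (fun h => h^-1 * (E (t + h) - E t)) @ 0^'+ --> dE ->
  (fun h => h^-1 * (phi (E (t + h)) - phi (E t))) @ 0^'+ --> d * dE.
Proof.
move=> phi_d E_slope.
(* Carathéodory's formulation: phi y - phi (E t) = rho (y - E t) * (y - E t)
   with rho continuous at 0, rho 0 = d. *)
pose rho k := if k == 0 then d else k^-1 * (phi (E t + k) - phi (E t)).
have rho_cont : {for 0, continuous rho}.
  apply/continuous_withinNx; rewrite /rho eqxx.
  move: (is_derive_slope phi_d); apply: cvg_trans; apply: near_eq_cvg.
  near=> k; have k0 : k != 0 by near: k; exact: nbhs_dnbhs_neq.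
  by rewrite /= (negbTE k0).
have E_cont : (fun h => E (t + h) - E t) @ 0^'+ --> 0.
  have : (fun h => h * (h^-1 * (E (t + h) - E t))) @ 0^'+ --> 0 * dE.
    by apply: cvgM => //; apply: cvg_at_right_filter; exact: cvg_id.
  rewrite mul0r; apply: cvg_trans; apply: near_eq_cvg.
  near=> h; have h0 : 0 < h by near: h; exact: nbhs_right_gt.
  by rewrite /= mulrA mulfV ?mul1r // gt_eqF.
have : (fun h => rho (E (t + h) - E t) * (h^-1 * (E (t + h) - E t)))
    @ 0^'+ --> d * dE.
  have rho0 : rho 0 = d by rewrite /rho eqxx.
  by apply: cvgM => //; rewrite -rho0; exact: continuous_cvg rho_cont E_cont.
apply: cvg_trans; apply: near_eq_cvg; near=> h; rewrite /rho.
have [E0|E0] := eqVneq (E (t + h) - E t) 0.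
  by move/eqP: E0; rewrite subr_eq0 => /eqP ->; rewrite !subrr !mulr0.
by rewrite (addrC (E t)) subrK mulrCA mulrAC mulVf // mul1r.
Unshelve. all: by end_near.
Qed.

Lemma powR_continuous x q : 0 < x -> {for x, continuous (fun y : R => y `^ q)}.
Proof.
move=> x_gt0; apply: differentiable_continuous; apply/derivable1_diffP.
exact: (@ex_derive _ _ _ _ _ _ _ (is_derive1_powR q x_gt0)).
Qed.

End RightSlope.

Section InnerProduct.
Variables (R : realType) (V : normedModType R) (inner : V -> V -> R).
Hypothesis inner_prod : is_inner_product inner.

Lemma innerC x y : inner x y = inner y x.
Proof. by case: inner_prod. Qed.

Lemma sqr_norm_inner x : `|x| ^+ 2 = inner x x.
Proof. by case: inner_prod. Qed.

Lemma innerDZl a x y z : inner (a *: x + y) z = a * inner x z + inner y z.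
Proof. by case: inner_prod. Qed.

Lemma inner0l z : inner 0 z = 0.
Proof. by have := innerDZl 1 0 0 z; rewrite scaler0 addr0 mul1r; lra. Qed.

Lemma innerDl x y z : inner (x + y) z = inner x z + inner y z.
Proof. by have := innerDZl 1 x y z; rewrite scale1r mul1r. Qed.

Lemma innerZl a x z : inner (a *: x) z = a * inner x z.
Proof. by rewrite -[a *: x]addr0 innerDZl inner0l addr0. Qed.

Lemma innerNl x z : inner (- x) z = - inner x z.
Proof. by rewrite -scaleN1r innerZl mulN1r. Qed.

Lemma innerBl x y z : inner (x - y) z = inner x z - inner y z.
Proof. by rewrite innerDl innerNl. Qed.

Lemma innerDr x y z : inner z (x + y) = inner z x + inner z y.
Proof. by rewrite innerC innerDl !(innerC z). Qed.

Lemma innerZr a x z : inner z (a *: x) = a * inner z x.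
Proof. by rewrite innerC innerZl innerC. Qed.

Lemma innerNr x z : inner z (- x) = - inner z x.
Proof. by rewrite innerC innerNl innerC. Qed.

Lemma inner_polarization x y :
  inner x y = (`|x + y| ^+ 2 - `|x - y| ^+ 2) / 4.
Proof.
rewrite !sqr_norm_inner !innerDl !innerDr !innerNl !innerNr (innerC y x).
by field.
Qed.

Lemma cvg_inner {T : Type} (F : set_system T) {FF : Filter F} (a b : T -> V) x y :
  a @ F --> x -> b @ F --> y -> (fun s => inner (a s) (b s)) @ F --> inner x y.
Proof.
move=> ax bx; under eq_fun do rewrite inner_polarization !expr2.
rewrite inner_polarization !expr2; apply: cvgMr_tmp.
by apply: cvgB; apply: cvgM; apply: cvg_norm;
  [apply: cvgD|apply: cvgD|apply: cvgB|apply: cvgB].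
Qed.

Section RightDerivative.
Variables (u : R -> V) (t : R) (v : V).
Hypothesis u_rder : h^-1 *: (u (t + h) - u t) @[h --> 0^'+] --> v.

Lemma right_slope_inner n :
  h^-1 * (inner (u (t + h)) n - inner (u t) n) @[h --> 0^'+] --> inner v n.
Proof.
under eq_fun do rewrite -innerBl -innerZl.
by apply: cvg_inner => //; exact: cvg_cst.
Qed.

Lemma right_slope_sqr_norm :
  h^-1 * (`|u (t + h)| ^+ 2 - `|u t| ^+ 2) @[h --> 0^'+] --> 2 * inner v (u t).
Proof.
have u_rcont : u (t + h) @[h --> 0^'+] --> u t.
  have : u t + h *: (h^-1 *: (u (t + h) - u t)) @[h --> 0^'+] --> u t + 0 *: v.
    apply: cvgD; first exact: cvg_cst.
    by apply: cvgZ => //; apply: cvg_at_right_filter; exact: cvg_id.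
  rewrite scale0r addr0; apply: cvg_trans; apply: near_eq_cvg.
  near=> h; have h0 : 0 < h by near: h; exact: nbhs_right_gt.
  by rewrite scalerA mulfV ?gt_eqF // scale1r addrC subrK.
have -> : 2 * inner v (u t) = inner v (u t + u t) by rewrite innerDr; ring.
have sqr_diff h : `|u (t + h)| ^+ 2 - `|u t| ^+ 2 =
    inner (u (t + h) - u t) (u (t + h) + u t).
  by rewrite !sqr_norm_inner innerBl !innerDr (innerC (u t) (u (t + h))); ring.
under eq_fun do rewrite sqr_diff -innerZl.
by apply: cvg_inner => //; apply: cvgD => //; exact: cvg_cst.
Unshelve. all: by end_near.
Qed.

End RightDerivative.
End InnerProduct.

Section Functional.
Variables (R : realType) (V : normedModType R) (inner : V -> V -> R).
Variables (J : V -> \bar R) (p : R).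
Hypotheses (inner_prod : is_inner_product inner)
  (J_convex : convex_functional J) (J_proper : proper_functional J)
  (J_hom : abs_homogeneous p J).

Lemma JZ c x : c != 0 -> J (c *: x) = ((`|c| `^ p)%:E * J x)%E.
Proof. by case: J_hom => JZ _; exact: JZ. Qed.

Lemma JN x : J (- x) = J x.
Proof. by rewrite -scaleN1r JZ ?oppr_eq0 ?oner_neq0 // normrN normr1 powR1 mul1e. Qed.

Let J_midpoint (x y : V) :
  (J (2^-1 *: x + 2^-1 *: y)%R <= (2^-1)%:E * J x + (2^-1)%:E * J y)%E.
Proof.
have half : 0 <= (2^-1 : R) <= 1 by apply/andP; split; lra.
by have := J_convex x y half; rewrite (_ : 1 - 2^-1 = 2^-1 :> R); last field.
Qed.

Lemma J_ge0 x : (0 <= J x)%E.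
Proof.
have := J_midpoint x (- x); rewrite scalerN subrr JN J_hom.2.
case: J_proper => /(_ x); case: (J x) => [r _ | _ | //]; last by rewrite leey.
by rewrite -EFinM -EFinD !lee_fin; lra.
Qed.

Lemma subdiff_fin_num {x z} : subdiff inner J x z -> exists j, J x = j%:E.
Proof.
case: J_proper => /(_ x) + [v Jv] z_sub; case: (J x) (z_sub v) => [j _ _ | | //].
  by exists j.
by rewrite /= => /(lt_le_trans Jv); rewrite ltxx.
Qed.

Lemma subdiff_le {x z j v y} : subdiff inner J x z -> J x = j%:E ->
  (J v <= y%:E)%E -> j + inner z (v - x) <= y.
Proof. by move=> z_sub Jx Jv; have := le_trans (z_sub v) Jv; rewrite Jx -EFinD lee_fin. Qed.

Lemma subdiff_orthogonal x z n : subdiff inner J x z -> nullJ J n -> inner z n = 0.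
Proof.
move=> z_sub Jn; have [j Jx] := subdiff_fin_num z_sub.
(* J (x + c n) <= 2^-1 J (2 x) + 2^-1 J (2 c n) = 2^(p-1) J x for every c,
   so the affine function c |-> j + c <z, n> is bounded above. *)
pose K := 2^-1 * (2 `^ p * j).
have bounded c : j + c * inner z n <= K.
  have := J_midpoint (2 *: x) ((2 * c) *: n).
  rewrite !scalerA (_ : 2^-1 * 2 = 1 :> R); last by field.
  rewrite (_ : 2^-1 * (2 * c) = c :> R); last by field.
  rewrite scale1r (@JZ 2 x) ?pnatr_eq0 //.
  have -> : J ((2 * c) *: n) = 0%E.
    have [->|c0] := eqVneq c 0; first by rewrite mulr0 scale0r J_hom.2.
    by rewrite JZ ?mulf_neq0 ?pnatr_eq0 // Jn mule0.
  rewrite mule0 adde0 Jx -!EFinM => /(subdiff_le z_sub Jx).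
  by rewrite (addrC x) addrK innerZr // ger0_norm.
have [//|zn0] := eqVneq (inner z n) 0.
have := bounded ((`|K - j| + 1) / inner z n); rewrite mulfVK //.
by have := ler_norm (K - j); lra.
Qed.

Lemma subdiff_euler x z j : subdiff inner J x z -> J x = j%:E ->
  p * j <= inner z x.
Proof.
move=> z_sub Jx; have j0 : 0 <= j by have := J_ge0 x; rewrite Jx lee_fin.
(* Testing the subgradient inequality at (1 + h) x, h < 0, and letting
   h -> 0 differentiates c |-> J (c x) = c ^ p j at c = 1. *)
have slope_le h : -1 < h < 0 -> j * (h^-1 * ((1 + h) `^ p - 1)) <= inner z x.
  move=> /andP[h_gt h_lt0]; have c0 : 0 < 1 + h by lra.
  have := subdiff_le (v := (1 + h) *: x) (y := (1 + h) `^ p * j) z_sub Jx.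
  rewrite JZ ?gt_eqF // Jx -EFinM gtr0_norm // => /(_ (lexx _)).
  rewrite -{2}(scale1r x) -scalerBl (innerZr inner_prod) => le1.
  rewrite (_ : j * _ = ((1 + h) `^ p - 1) * j / h); last by field; exact: ltr0_neq0.
  by rewrite ler_ndivrMr // mulrC; lra.
have p_slope := is_derive_slope (is_derive1_powR p (@ltr01 R)).
rewrite powR1 mulr1 in p_slope.
rewrite mulrC; apply: (cvgr_to_le (cvgMl_tmp (a := j) (cvg_dnbhs_at_left p_slope))).
near=> h; apply: slope_le; apply/andP; split.
  by near: h; apply: nbhs_left_gt; rewrite ltrN10.
by near: h; exact: nbhs_left_lt.
Unshelve. all: by end_near.
Qed.

End Functional.

Section Rayleigh.
Variables (R : realType) (V : normedModType R) (inner : V -> V -> R).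
Variables (J : V -> \bar R) (p lam1 : R).
Hypothesis lambda1E : lambda1 p inner J = lam1%:E.

Lemma lambda1_le_rayleigh v : H0 inner J v -> (lam1%:E <= rayleigh p J v)%E.
Proof. by move=> v_H0; rewrite -lambda1E; apply: ereal_inf_lbound; exists v. Qed.

Lemma lambda1_le v j : H0 inner J v -> J v = j%:E -> lam1 * `|v| `^ p <= p * j.
Proof.
move=> v_H0 Jv; have := lambda1_le_rayleigh v_H0.
have v_gt0 : 0 < `|v| `^ p by apply: powR_gt0; rewrite normr_gt0; case: v_H0.
by rewrite /rayleigh Jv -EFinM lee_fin mulrAC ler_pdivlMr.
Qed.

Hypotheses (inner_prod : is_inner_product inner) (J_lsc : lower_semicontinuous J)
  (p_gt0 : 0 < p).

Lemma ground_state_of_cvg (w : nat -> V) (w0 : V) (r : R) :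
  0 < r -> w @ \oo --> w0 ->
  (\forall k \near \oo, [/\ `|w k| = r,
      forall n, nullJ J n -> inner (w k) n = 0 &
      (J (w k) <= (lam1 * r `^ p / p)%:E)%E]) ->
  ground_state p inner J w0.
Proof.
move=> r_gt0 w_w0 w_props.
have norm_w0 : `|w0| = r.
  apply: (cvg_unique (@norm_hausdorff _ _) (cvg_norm w_w0)); apply: cvg_near_cst.
  by apply: filterS w_props => k [].
have w0_H0 : H0 inner J w0.
  split=> [|n Jn]; first by rewrite -normr_gt0 norm_w0.
  apply: (cvg_unique (@norm_hausdorff _ _) (cvg_inner inner_prod w_w0 (cvg_cst n))).
  by apply: cvg_near_cst; apply: filterS w_props => k [_ /(_ n Jn)].
have J_w0 : (J w0 <= (lam1 * r `^ p / p)%:E)%E.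
  rewrite leNgt; apply/negP => /J_lsc[W W_w0 J_W].
  have [k [[_ _ Jk] /J_W]] := filter_ex (filterI w_props (w_w0 _ W_w0)).
  by rewrite ltNge Jk.
split => // v v_H0; apply: le_trans (lambda1_le_rayleigh v_H0).
have r_p : 0 < r `^ p by exact: powR_gt0.
rewrite /rayleigh norm_w0.
apply: le_trans (lee_wpmul2l _ J_w0) _; first by rewrite lee_fin divr_ge0 // ltW.
rewrite -EFinM lee_fin (_ : p / r `^ p * (lam1 * r `^ p / p) = lam1) //.
by field; rewrite !gt_eqF.
Qed.

End Rayleigh.

Section GradientFlow.
Variables (R : realType) (V : normedModType R) (inner : V -> V -> R).
Variables (J : V -> \bar R) (p lam1 : R) (f : V) (u : R -> V) (Tex : R).
Hypotheses (inner_prod : is_inner_product inner)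
  (J_convex : convex_functional J) (J_proper : proper_functional J)
  (J_hom : abs_homogeneous p J) (p_gt0 : 0 < p)
  (lambda1E : lambda1 p inner J = lam1%:E)
  (f_H0 : H0 inner J f) (u_flow : gradient_flow_solution inner J f u)
  (TexE : extinction_time u = Tex%:E).
Implicit Types (s t : R) (n : V).

Let u0 : u 0 = f. Proof. by case: u_flow. Qed.

Lemma flow_cvg_within t : 0 <= t -> u @ within [set s | 0 <= s] (nbhs t) --> u t.
Proof. by case: u_flow => /(subspace_continuousP _ _).1 + _ _ _; apply. Qed.

Lemma flow_right_derivative t : 0 < t -> exists zeta j,
  [/\ h^-1 *: (u (t + h) - u t) @[h --> 0^'+] --> - zeta,
      J (u t) = j%:E, p * j <= inner zeta (u t) &
      forall n, nullJ J n -> inner zeta n = 0].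
Proof.
case: u_flow => _ _ _ /[apply] -[zeta [[zeta_sub _] u_rder]].
have [j Jut] := subdiff_fin_num J_proper zeta_sub.
exists zeta, j; split => //.
  exact (subdiff_euler inner_prod J_convex J_proper J_hom zeta_sub Jut).
by move=> n; exact: (subdiff_orthogonal inner_prod J_convex J_proper J_hom zeta_sub).
Qed.

Lemma flow_orthogonal n t : nullJ J n -> 0 <= t -> inner (u t) n = 0.
Proof.
move=> Jn t_ge0.
(* both s |-> <u s, n> and its opposite have right slope -<zeta, n> = 0 *)
have mono sg : sg * inner (u t) n <= sg * inner (u 0) n.
  apply: (@right_slope_le0_nonincreasing _ (fun s => sg * inner (u s) n)
    [set s | 0 <= s]) => //.
  - by move=> s /andP[].
  - move=> s /andP[s_ge0 _]; apply: cvgMl_tmp.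
    exact: (cvg_inner inner_prod (flow_cvg_within s_ge0) (cvg_cst n)).
  - move=> s /andP[s_gt0 _].
    have [zeta [j [u_rder _ _ zeta_orth]]] := flow_right_derivative s_gt0.
    exists (sg * inner (- zeta) n).
      by rewrite (innerNl inner_prod) zeta_orth ?oppr0 ?mulr0.
    under eq_fun do rewrite -mulrBr mulrCA.
    by apply: cvgMl_tmp; exact: (right_slope_inner inner_prod u_rder).
have := mono 1; have := mono (-1).
by rewrite u0 (f_H0.2 n Jn); lra.
Qed.

Lemma flow_sqr_norm_nonincreasing s t : 0 <= s <= t -> `|u t| ^+ 2 <= `|u s| ^+ 2.
Proof.
case/andP => s_ge0 st.
apply: (@right_slope_le0_nonincreasing _ (fun r => `|u r| ^+ 2) [set r | 0 <= r]) => //.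
- by move=> r /andP[sr _]; exact: le_trans s_ge0 sr.
- move=> r /andP[sr _]; rewrite expr2.
  by apply: cvgM; apply: cvg_norm; exact: (flow_cvg_within (le_trans s_ge0 sr)).
- move=> r /andP[sr _].
  have [zeta [j [u_rder Jur pj _]]] := flow_right_derivative (le_lt_trans s_ge0 sr).
  exists (2 * inner (- zeta) (u r)); last exact: (right_slope_sqr_norm inner_prod u_rder).
  have j_ge0 : 0 <= j by have := J_ge0 J_convex J_proper J_hom (u r); rewrite Jur lee_fin.
  rewrite (innerNl inner_prod) mulrN oppr_le0 mulr_ge0 //.
  by apply: le_trans pj; rewrite mulr_ge0 // ltW.
Qed.

Lemma flow_neq0 t : 0 <= t < Tex -> u t != 0.
Proof.
case/andP => t_ge0 tT; apply/negP => /eqP ut0.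
have t_gt0 : 0 < t.
  rewrite lt_neqAle t_ge0 andbT; apply: contraNneq f_H0.1 => t0.
  by subst t; rewrite -u0 ut0.
have u_vanishes s : t <= s -> u s = 0.
  move=> ts; apply/normr0_eq0/eqP; rewrite -sqrf_eq0 eq_le sqr_ge0 andbT.
  have := flow_sqr_norm_nonincreasing (s := t) (t := s).
  by rewrite t_ge0 ts ut0 normr0 expr0n; apply.
have : Tex <= t.
  by rewrite -lee_fin -TexE; apply: ereal_inf_lbound; exists t.
by rewrite leNgt tT.
Qed.

Lemma flow_H0 t : 0 <= t < Tex -> H0 inner J (u t).
Proof.
move=> tT; split; first exact: flow_neq0.
by move=> n Jn; apply: flow_orthogonal => //; case/andP: tT.
Qed.

Hypotheses (p_lt2 : p < 2) (lam1_gt0 : 0 < lam1).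

Let c := (2 - p) * lam1.

Let psi t := `|u t| `^ (2 - p) + c * t.

Let psi_cvg_within t : 0 <= t < Tex -> psi @ within [set s | 0 <= s] (nbhs t) --> psi t.
Proof.
move=> tT; case/andP: (tT) => t_ge0 _.
have ut_gt0 : 0 < `|u t| by rewrite normr_gt0 flow_neq0.
apply: cvgD; last by apply: cvgMl_tmp; apply: cvg_within_filter; exact: cvg_id.
exact: (continuous_cvg _ (powR_continuous (q := 2 - p) ut_gt0)
  (cvg_norm (flow_cvg_within t_ge0))).
Qed.

Let psi_right_slope t : 0 < t < Tex -> exists zeta j,
  [/\ J (u t) = j%:E, p * j <= inner zeta (u t) &
      h^-1 * (psi (t + h) - psi t) @[h --> 0^'+] -->
        (2 - p) * (lam1 - inner zeta (u t) / `|u t| `^ p)].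
Proof.
move=> /andP[t_gt0 tT]; have [zeta [j [u_rder Jut pj _]]] := flow_right_derivative t_gt0.
exists zeta, j; split => //.
have ut_gt0 : 0 < `|u t| by rewrite normr_gt0 flow_neq0 // ltW.
have sqr_gt0 : 0 < `|u t| ^+ 2 by rewrite exprn_gt0.
set q := (2 - p) / 2.
have powR_sqr x : `|x| `^ (2 - p) = (`|x| ^+ 2) `^ q.
  by rewrite -powR_mulrn // -powRrM /q mulrC divfK.
have := right_slope_comp (E := fun s => `|u s| ^+ 2) (is_derive1_powR q sqr_gt0)
  (right_slope_sqr_norm inner_prod u_rder).
have -> : (`|u t| ^+ 2) `^ (q - 1) = (`|u t| `^ p)^-1.
  by rewrite -powR_mulrn // -powRrM -powRN /q; congr (_ `^ _); field.
move=> chain.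
have -> : (2 - p) * (lam1 - inner zeta (u t) / `|u t| `^ p) =
    q * (`|u t| `^ p)^-1 * (2 * inner (- zeta) (u t)) + c.
  by rewrite (innerNl inner_prod) /q /c; field; rewrite gt_eqF // powR_gt0.
have : h^-1 * ((`|u (t + h)| ^+ 2) `^ q - (`|u t| ^+ 2) `^ q) + c @[h --> 0^'+] -->
    q * (`|u t| `^ p)^-1 * (2 * inner (- zeta) (u t)) + c.
  by apply: cvgD chain (cvg_cst c).
apply: cvg_trans; apply: near_eq_cvg; near=> h.
have h_gt0 : 0 < h by near: h; exact: nbhs_right_gt.
by rewrite /psi !powR_sqr /=; field; rewrite gt_eqF.
Unshelve. all: by end_near.
Qed.

Let psi_nonincreasing a b : 0 <= a <= b -> b < Tex -> psi b <= psi a.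
Proof.
case/andP => a_ge0 ab bT.
apply: (@right_slope_le0_nonincreasing _ psi [set s | 0 <= s]) => // [s|s|s].
- by case/andP => a_s _; exact: le_trans a_ge0 a_s.
- case/andP => a_s s_b; apply: psi_cvg_within.
  by rewrite (le_trans a_ge0 a_s) (le_lt_trans s_b bT).
- case/andP => a_s s_b; have s_gt0 := le_lt_trans a_ge0 a_s.
  have sT := lt_trans s_b bT.
  have [zeta [j [Jus pj psi_slope]]] := psi_right_slope (t := s) ltac:(by rewrite s_gt0 sT).
  exists ((2 - p) * (lam1 - inner zeta (u s) / `|u s| `^ p)) => //.
  have us_p : 0 < `|u s| `^ p by rewrite powR_gt0 // normr_gt0 flow_neq0 // (ltW s_gt0).
  rewrite pmulr_rle0 ?subr_gt0 // subr_le0 ler_pdivlMr //.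
  have us_H0 : H0 inner J (u s) by apply: flow_H0; rewrite (ltW s_gt0).
  exact: (le_trans (lambda1_le lambda1E us_H0 Jus) pj).
Qed.

Hypothesis Tex_critical : Tex = `|f| `^ (2 - p) / ((2 - p) * lam1).

Let cTex : c * Tex = `|f| `^ (2 - p).
Proof. by rewrite Tex_critical /c; field; rewrite !gt_eqF // subr_gt0. Qed.

Let psi_cst t : 0 <= t < Tex -> psi t = c * Tex.
Proof.
case/andP => t_ge0 tT.
apply/eqP; rewrite eq_le; apply/andP; split.
  have <- : psi 0 = c * Tex by rewrite /psi u0 mulr0 addr0 cTex.
  by apply: psi_nonincreasing => //; rewrite lexx.
apply: (cvgr_to_le (cvgMl_tmp (a := c) (cvg_at_left_filter (@cvg_id _ (nbhs Tex))))).
near=> b.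
have tb : t <= b by near: b; exact: nbhs_left_ge.
have bT : b < Tex by near: b; exact: nbhs_left_lt.
apply: le_trans (psi_nonincreasing _ bT); last by rewrite t_ge0 tb.
by rewrite /psi lerDr powR_ge0.
Unshelve. all: by end_near.
Qed.

Lemma flow_norm_decay t : 0 <= t < Tex ->
  `|u t| `^ (2 - p) = `|f| `^ (2 - p) * (1 - t / Tex).
Proof.
move=> tT; have := psi_cst tT; rewrite /psi => /(canRL (addrK _)) ->.
have Tex_gt0 : 0 < Tex by case/andP: tT; exact: le_lt_trans.
by rewrite -cTex; field; rewrite gt_eqF.
Qed.

Lemma flow_energy_le t : 0 < t < Tex ->
  exists j, J (u t) = j%:E /\ p * j <= lam1 * `|u t| `^ p.
Proof.
move=> tT; case/andP: (tT) => t_gt0 t_lt.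
have [zeta [j [Jut pj psi_slope]]] := psi_right_slope tT.
exists j; split => //; apply: le_trans pj _.
have ut_p : 0 < `|u t| `^ p by rewrite powR_gt0 // normr_gt0 flow_neq0 // (ltW t_gt0).
have psi_t : \forall h \near 0^'+, psi (t + h) = psi t.
  near=> h; rewrite !psi_cst ?(ltW t_gt0) //.
  have h_gt0 : 0 < h by near: h; exact: nbhs_right_gt.
  have hT : h < Tex - t by near: h; apply: nbhs_right_lt; rewrite subr_gt0.
  by apply/andP; split; lra.
move/eqP: (right_slope_eq0 psi_t psi_slope).
rewrite mulf_eq0 (gt_eqF (_ : 0 < 2 - p)) ?subr_gt0 //= subr_eq0 => /eqP ->.
by rewrite divfK ?gt_eqF.
Unshelve. all: by end_near.
Qed.

Lemma rescaled_flow t : 0 < t < Tex ->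
  let w := ((1 - t / Tex) `^ (1 / (2 - p)))^-1 *: u t in
  [/\ `|w| = `|f|, forall n, nullJ J n -> inner w n = 0 &
      (J w <= (lam1 * `|f| `^ p / p)%:E)%E].
Proof.
move=> tT w; case/andP: (tT) => t_gt0 t_lt; rewrite {}/w.
set a := (1 - t / Tex) `^ (1 / (2 - p)).
have Tex_gt0 : 0 < Tex := lt_trans t_gt0 t_lt.
have r_gt0 : 0 < 1 - t / Tex by rewrite subr_gt0 ltr_pdivrMr // mul1r.
have a_gt0 : 0 < a by rewrite powR_gt0.
have norm_ut : `|u t| = `|f| * a.
  have root x : 0 <= x -> (x `^ (2 - p)) `^ (1 / (2 - p)) = x.
    by move=> x_ge0; rewrite -powRrM mulrC divfK ?gt_eqF ?subr_gt0 // powRr1.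
  rewrite -(root `|u t|) // flow_norm_decay ?(ltW t_gt0) ?t_lt //.
  by rewrite powRM ?powR_ge0 ?(ltW r_gt0) // root.
have inv_a : a^-1 `^ p * a `^ p = 1.
  by rewrite -powRM ?invr_ge0 ?(ltW a_gt0) // mulVf ?gt_eqF // powR1.
split.
- by rewrite normrZ gtr0_norm ?invr_gt0 // norm_ut mulrCA mulVf ?gt_eqF ?mulr1.
- by move=> n Jn; rewrite (innerZl inner_prod) flow_orthogonal ?mulr0 // ltW.
have [j [Jut pj]] := flow_energy_le tT.
rewrite (JZ J_hom) ?invr_neq0 ?gt_eqF // Jut -EFinM lee_fin gtr0_norm ?invr_gt0 //.
rewrite ler_pdivlMr // mulrAC -mulrA.
apply: le_trans (_ : _ <= a^-1 `^ p * (lam1 * `|u t| `^ p)) _.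
  by rewrite ler_wpM2l // powR_ge0.
rewrite norm_ut powRM ?(ltW a_gt0) //.
have -> : a^-1 `^ p * (lam1 * (`|f| `^ p * a `^ p)) = lam1 * `|f| `^ p * (a^-1 `^ p * a `^ p).
  by ring.
by rewrite inv_a mulr1.
Qed.

End GradientFlow.

Theorem corollary7 (R : realType) (V : completeNormedModType R)
  (inner : V -> V -> R) (J : V -> \bar R) (p lam1 : R)
  (f : V) (u : R -> V) (Tex : R) (wstar : V) (tk : nat -> R) :
  is_inner_product inner ->
  convex_functional J -> lower_semicontinuous J -> proper_functional J ->
  dense_set (effective_domain J) -> abs_homogeneous p J ->
  lambda1 p inner J = lam1%:E -> 0 < lam1 ->
  1 <= p < 2 ->
  H0 inner J f ->
  gradient_flow_solution inner J f u ->
  extinction_time u = Tex%:E ->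
  Tex = `|f| `^ (2 - p) / ((2 - p) * lam1) ->
  (forall k, 0 <= tk k < Tex) ->
  (forall k, tk k < tk k.+1) ->
  tk @ \oo --> Tex ->
  (fun k => ((1 - tk k / Tex) `^ (1 / (2 - p)))^-1 *: u (tk k)) @ \oo --> wstar ->
  ground_state p inner J wstar.
Proof.
move=> inner_prod J_convex J_lsc J_proper _ J_hom lambda1E lam1_gt0 /andP[p_ge1 p_lt2]
  f_H0 u_flow TexE Tex_critical tk_range tk_incr _ w_cvg.
have p_gt0 : 0 < p := lt_le_trans ltr01 p_ge1.
have f_gt0 : 0 < `|f| by rewrite normr_gt0; case: f_H0.
apply: (ground_state_of_cvg lambda1E inner_prod J_lsc p_gt0 f_gt0 w_cvg).
near=> k.
have tk_pos : 0 < tk k < Tex.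
  have k_gt0 : (0 < k)%N by near: k; exists 1%N.
  case/andP: (tk_range k) => _ ->; case/andP: (tk_range k.-1) => tk_ge0 _.
  by have := tk_incr k.-1; rewrite prednK // andbT; exact: le_lt_trans.
exact: (rescaled_flow inner_prod J_convex J_proper J_hom p_gt0 lambda1E f_H0 u_flow TexE
  p_lt2 lam1_gt0 Tex_critical tk_pos).
Unshelve. all: by end_near.
Qed.
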